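(* Let $\mathbb K\in\{\mathbb R,\mathbb C\}$, $\Omega=\mathbb K^{\mathbb Z_+}$, let $\mu=\bigotimes_{n\ge0}\mu_n$ be a product of Borel probability measures $\mu_n$ on $\mathbb K$, and let $\mathbf w=(w_n)_{n\ge1}$ be a sequence of non-zero scalars. Then $\mu$ is $B_{\mathbf w}$-invariant if and only if for every $n\ge1$ and every Borel set $A\subseteq\mathbb K$, $\mu_n(A)=\mu_0(w_1\cdots w_nA)$ (i.e. $\mu_n$ is the image of $\mu_0$ under $t\mapsto t/(w_1\cdots w_n)$).
   Context: $\Omega$ carries the product topology and its Borel $\sigma$-algebra. $B_{\mathbf w}:\Omega\to\Omega$ is defined by $(B_{\mathbf w}t)_j=w_{j+1}t_{j+1}$ for $j\ge0$, where $t=(t_j)_{j\ge0}$. Invariance means $\mu(B_{\mathbf w}^{-1}(B))=\mu(B)$ for all Borel $B\subseteq\Omega$. *)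

(* K ranges over R (a realType) and
   C = R[i] (mathcomp-real-closed complex numbers over R). *)
From HB Require Import structures.
From mathcomp Require Import all_boot all_order all_algebra.
From mathcomp Require Import all_classical all_reals all_analysis.
From mathcomp.real_closed Require Import complex.
Import Order.TTheory GRing.Theory Num.Theory.
Local Open Scope ring_scope.
Local Open Scope classical_set_scope.

(* A copy of the scalar field K equipped with a point (needed to build the
   generated sigma-algebra). *)
Definition scal (K : numFieldType) : Type := K.
HB.instance Definition _ (K : numFieldType) := Choice.on (scal K).
HB.instance Definition _ (K : numFieldType) := isPointed.Build (scal K) (0 : K).

Definition Kopen (K : numFieldType) (A : set (scal K)) : Prop :=
  forall x : K, A x -> exists2 e : K, 0 < e & forall y : K, `|y - x| < e -> A y.

(* Open sets of Omega = K^{Z_+} for the product topology: a set is open iff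
   around each of its points it contains a basic cylinder neighbourhood
   {s | |s_i - t_i| < e for all i < N}. *)
Definition Omega_open (K : numFieldType) (U : set (nat -> scal K)) : Prop :=
  forall t : nat -> K, U t -> exists N : nat, exists2 e : K, 0 < e &
    forall s : nat -> K, (forall i, (i < N)%N -> `|s i - t i| < e) -> U s.

Notation KBorel K := (g_sigma_algebraType (@Kopen K)).
Notation OmegaBorel K := (g_sigma_algebraType (@Omega_open K)).

Definition Bw (K : numFieldType) (w : nat -> K) (t : nat -> K) : nat -> K :=
  fun j => w j.+1 * t j.+1.

(* mu is the product measure (x)_n mu_n: it is a probability measure on
   the Borel sets of Omega giving every measurable cylinder
   A_0 x ... x A_{N-1} x K x K x ... the mass prod_{i<N} mu_i(A_i)
   (this determines mu uniquely on the Borel sigma-algebra). *)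
Definition is_product_measure (R : realType) (K : numFieldType)
    (mu : probability (OmegaBorel K) R) (mun : nat -> probability (KBorel K) R)
    : Prop :=
  forall (N : nat) (A : nat -> set (KBorel K)),
    (forall i, (i < N)%N -> measurable (A i)) ->
    mu [set t : OmegaBorel K | forall i, (i < N)%N -> A i (t i)] =
    (\prod_(i < N) mun i (A i))%E.

Definition Bw_invariant (R : realType) (K : numFieldType) (w : nat -> K)
    (mu : probability (OmegaBorel K) R) : Prop :=
  forall B : set (OmegaBorel K), measurable B ->
    mu ((@Bw K w) @^-1` B) = mu B.

Definition lemma5p2_for (R : realType) (K : numFieldType) : Prop :=
  forall (mun : nat -> probability (KBorel K) R)
         (mu : probability (OmegaBorel K) R) (w : nat -> K),
    (forall n, (1 <= n)%N -> w n != 0) ->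
    @is_product_measure R K mu mun ->
    (@Bw_invariant R K w mu <->
     forall n, (1 <= n)%N -> forall A : set (KBorel K), measurable A ->
       mun n A = mun 0%N [set (\prod_(1 <= k < n.+1) w k) * a | a in A]).

From mathcomp Require Import all_boot all_order all_algebra.
From mathcomp Require Import all_classical all_reals all_analysis.
From mathcomp.real_closed Require Import complex.
From mathcomp Require Import lra.
Set Implicit Arguments.
Unset Strict Implicit.
Unset Printing Implicit Defensive.
Import Order.TTheory GRing.Theory Num.Theory.
Local Open Scope ring_scope.
Local Open Scope classical_set_scope.

(* The marginals of the product measure mu are the mu_n, and B_w maps the
   coordinate n+1, scaled by w_{n+1}, to the coordinate n.  Hence invariance
   gives mu_{n+1}((w_{n+1} .)^-1 A) = mu_n(A), a recursion whose solution is
   mu_n(A) = mu_0(w_1...w_n A).  Conversely, this recursion makes mu and its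
   image under B_w agree on measurable cylinders; since K has a dense sequence
   (from Q, resp. Q + iQ), these cylinders form a pi-system generating the
   Borel sets of Omega, so the two probability measures coincide. *)

Lemma measurable_preimageT d d' (T : measurableType d) (U : measurableType d')
  (f : T -> U) B : measurable_fun setT f -> measurable B -> measurable (f @^-1` B).
Proof. by move=> mf mB; rewrite -[_ @^-1` _]setTI; exact: mf. Qed.

Section borel_sets.
Variable K : numFieldType.

Definition dense_seq (d : nat -> K) : Prop :=
  forall x e : K, 0 < e -> exists n, `|x - d n| < e.

Definition scaling (c : K) (x : KBorel K) : KBorel K := c * x.

Definition coord (i : nat) (t : OmegaBorel K) : KBorel K := t i.

Lemma measurable_scaling c : measurable_fun setT (scaling c).
Proof.
apply: (@measurability _ _ (KBorel K) (KBorel K) setT _ (@Kopen K)) => //.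
move=> _ [A KA <-]; apply: sub_sigma_algebra; rewrite setTI.
move=> x /= Acx; have [e e0 He] := KA _ Acx.
have [c0|c0] := eqVneq c 0.
  by exists 1 => // y _; move: Acx; rewrite /scaling c0 !mul0r.
have absc_gt0 : 0 < `|c| by rewrite normr_gt0.
exists (e / `|c|); first by rewrite divr_gt0.
move=> y; rewrite ltr_pdivlMr // => hy; apply: He.
by rewrite /scaling -mulrBr normrM mulrC.
Qed.

Lemma measurable_coord i : measurable_fun setT (coord i).
Proof.
apply: (@measurability _ _ (OmegaBorel K) (KBorel K) setT _ (@Kopen K)) => //.
move=> _ [A KA <-]; apply: sub_sigma_algebra; rewrite setTI.
move=> t /= At; have [e e0 He] := KA _ At.
by exists i.+1, e => // s hs; apply: He; exact: hs.
Qed.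

Lemma measurable_preimage_scaling c A :
  measurable A -> measurable (scaling c @^-1` A).
Proof. exact: measurable_preimageT (measurable_scaling c). Qed.

Definition cyl (N : nat) (A : nat -> set (KBorel K)) : set (OmegaBorel K) :=
  [set t | forall i, (i < N)%N -> A i (t i)].

Definition cylinders : set (set (OmegaBorel K)) :=
  [set C | exists N A, (forall i, (i < N)%N -> measurable (A i)) /\ C = cyl N A].

Lemma cyl0 A : cyl 0 A = setT.
Proof. by apply/seteqP; split => t //= _ i; rewrite ltn0. Qed.

Lemma measurable_cyl N A : (forall i, (i < N)%N -> measurable (A i)) ->
  measurable (cyl N A).
Proof.
move=> mA; change (measurable (\bigcap_(i in `I_N) coord i @^-1` A i)).
apply: bigcap_measurableType => i /= iN.
exact: measurable_preimageT (measurable_coord i) (mA i iN).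
Qed.

Lemma cylinders_measurable : cylinders `<=` measurable.
Proof. by move=> _ [N [A [mA ->]]]; exact: measurable_cyl. Qed.

Lemma setI_closed_cylinders : setI_closed cylinders.
Proof.
move=> _ _ [N1 [A1 [mA1 ->]]] [N2 [A2 [mA2 ->]]].
pose pad N A i : set (KBorel K) := if (i < N)%N then A i else setT.
have mpad N A i : (forall i, (i < N)%N -> measurable (A i)) -> measurable (pad N A i).
  by rewrite /pad; case: ifP => // iN /(_ i iN).
exists (maxn N1 N2), (fun i => pad N1 A1 i `&` pad N2 A2 i).
split=> [i _|]; first by apply: measurableI; exact: mpad.
apply/seteqP; split=> t /=.
  by move=> [h1 h2] i _; rewrite /pad; split; case: ifP => // iN; [exact: h1|exact: h2].
move=> h; split=> i iN.
  by have [+ _] := h i (leq_trans iN (leq_maxl _ _)); rewrite /pad iN.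
by have [_ +] := h i (leq_trans iN (leq_maxr _ _)); rewrite /pad iN.
Qed.

Lemma preimage_Bw_cyl w N A : Bw K w @^-1` cyl N A =
  cyl N.+1 (fun i => if i is j.+1 then scaling (w i) @^-1` A j else setT).
Proof.
apply/seteqP; split=> t /=; first by move=> h [|i] //= iN; exact: h.
by move=> h i iN; exact: (h i.+1 iN).
Qed.

Definition Kball (c r : K) : set (KBorel K) := [set y | `|y - c| < r].

Lemma measurable_Kball c r : measurable (Kball c r).
Proof.
apply: sub_sigma_algebra => y /= hy; exists (r - `|y - c|); first by rewrite subr_gt0.
by move=> z hz; rewrite /Kball /= (le_lt_trans (ler_distD y z c)) // -ltrBrDr.
Qed.

Section dense_sequence.
Variable d : nat -> K.

Lemma dense_seq_small_norm e : dense_seq d -> 0 < e -> exists m, 0 < `|d m| < e.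
Proof.
move=> d_dense e0; have e20 : 0 < e / 2 by rewrite divr_gt0.
have [m hm] := d_dense (e / 2) (e / 2) e20; exists m; apply/andP; split.
  have := ler_distD (d m) (e / 2) 0; rewrite !subr0 (gtr0_norm e20).
  by move/(lt_le_trans hm); rewrite ltrDl.
have := ler_distD (e / 2) (d m) 0; rewrite !subr0 (gtr0_norm e20) distrC.
by move/le_lt_trans; apply; rewrite [ltRHS]splitr ltrD2r.
Qed.

Lemma Omega_open_sigma_cylinders U : dense_seq d -> Omega_open K U -> <<s cylinders >> U.
Proof.
move=> d_dense Uopen.
(* Radii are taken among the |d m| to keep the family countable: K need not
   be archimedean. *)
pose C (c : nat * seq nat * nat) :=
  cyl c.1.1 (fun i => Kball (d (nth 0%N c.1.2 i)) `|d c.2|).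
have -> : U = \bigcup_c (if `[< C c `<=` U >] then C c else set0).
  apply/seteqP; split=> [t Ut|t [c _]]; last by case: asboolP => // CU /CU.
  have [N [e e0 He]] := Uopen t Ut.
  have [m /andP[r0 r2]] := dense_seq_small_norm d_dense (divr_gt0 e0 (ltr0Sn _ 1)).
  have [p hp] := choice (fun i => d_dense (t i) _ r0).
  have nthp i : (i < N)%N -> nth 0%N (mkseq p N) i = p i by move=> iN; rewrite nth_mkseq.
  pose c := (N, mkseq p N, m).
  have Ct : C c t by move=> i iN; rewrite /Kball /= nthp.
  have CU : C c `<=` U.
    move=> s Cs; apply: He => i iN.
    have s_near : `|s i - d (p i)| < `|d m| by have := Cs i iN; rewrite /Kball /= nthp.
    have t_near : `|d (p i) - t i| < `|d m| by rewrite distrC.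
    rewrite (le_lt_trans (ler_distD (d (p i)) _ _)) // [ltRHS]splitr.
    apply: ltrD; [exact: lt_trans s_near r2|exact: lt_trans t_near r2].
  by exists c => //; rewrite asboolT.
apply: (countable_bigcupT_measurable (T := g_sigma_algebraType cylinders)) => [|c].
  exact: countableP.
case: asboolP => _; last exact: sigma_algebra0.
apply: sub_sigma_algebra; exists c.1.1, (fun i => Kball (d (nth 0%N c.1.2 i)) `|d c.2|).
by split=> // i _; exact: measurable_Kball.
Qed.

Lemma measurable_OmegaE :
  dense_seq d -> @measurable _ (OmegaBorel K) = <<s cylinders >>.
Proof.
move=> d_dense; apply/seteqP; split; apply: smallest_sub.
- exact: smallest_sigma_algebra.
- by move=> U; exact: Omega_open_sigma_cylinders.
- exact: sigma_algebra_measurable.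
- exact: cylinders_measurable.
Qed.

Lemma measurable_Bw w :
  dense_seq d -> measurable_fun setT (Bw K w : OmegaBorel K -> OmegaBorel K).
Proof.
move=> d_dense; apply: (@measurability _ _ (OmegaBorel K) (OmegaBorel K) setT _ _
  (measurable_OmegaE d_dense)) => _ [_ [N [A [mA ->]]] <-].
rewrite setTI preimage_Bw_cyl; apply: measurable_cyl => -[|i] //= iN.
exact: measurable_preimage_scaling (mA i iN).
Qed.

End dense_sequence.

Lemma preimage_scalingM a b A :
  scaling a @^-1` (scaling b @^-1` A) = scaling (b * a) @^-1` A.
Proof. by apply/seteqP; split=> x; rewrite /scaling /= mulrA. Qed.

Lemma preimage_scaling1 A : scaling 1 @^-1` A = A.
Proof. by apply/seteqP; split=> x; rewrite /scaling /= mul1r. Qed.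

Lemma image_scaling c (A : set (KBorel K)) :
  c != 0 -> [set c * a | a in A] = scaling c^-1 @^-1` A.
Proof.
move=> c0; apply/seteqP; split=> x /=; first by move=> [a Aa <-]; rewrite /scaling mulKf.
by move=> Ax; exists (c^-1 * x); rewrite // mulVKf.
Qed.

Lemma scaling_recursionP (T : Type) (nu : nat -> set (KBorel K) -> T) (w : nat -> K) :
  (forall n, (1 <= n)%N -> w n != 0) ->
  (forall n A, measurable A -> nu n.+1 (scaling (w n.+1) @^-1` A) = nu n A) <->
  (forall n, (1 <= n)%N -> forall A, measurable A ->
     nu n A = nu 0%N [set (\prod_(1 <= k < n.+1) w k) * a | a in A]).
Proof.
move=> w0; pose c n := (\prod_(1 <= k < n.+1) w k)^-1.
have c0 : c 0%N = 1 by rewrite /c big_geq ?invr1.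
have cS n : c n.+1 = (w n.+1)^-1 * c n by rewrite /c big_nat_recr //= invfM mulrC.
have imageE n (A : set (KBorel K)) :
    [set (\prod_(1 <= k < n.+1) w k) * a | a in A] = scaling (c n) @^-1` A.
  rewrite image_scaling // prodf_seq_neq0; apply/allP => k.
  by rewrite mem_index_iota => /andP[k1 _]; exact: w0.
split=> [chain n _ A mA|H].
  rewrite imageE; elim: n A mA => [|n IH] A mA; first by rewrite c0 preimage_scaling1.
  have AE : A = scaling (w n.+1) @^-1` (scaling (w n.+1)^-1 @^-1` A).
    by rewrite preimage_scalingM mulVf ?w0 // preimage_scaling1.
  rewrite {1}AE chain; last exact: measurable_preimage_scaling.
  by rewrite IH ?preimage_scalingM ?cS //; exact: measurable_preimage_scaling.
have {}H n B : measurable B -> nu n B = nu 0%N (scaling (c n) @^-1` B).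
  by case: n => [|n] mB; rewrite ?c0 ?preimage_scaling1 // -imageE; exact: H.
move=> n A mA; rewrite H; last exact: measurable_preimage_scaling.
by rewrite preimage_scalingM cS mulVKf ?w0 // -H.
Qed.

End borel_sets.

Section product_measure.
Variables (R : realType) (K : numFieldType).
Variables (mun : nat -> probability (KBorel K) R) (mu : probability (OmegaBorel K) R).
Hypothesis mu_prod : is_product_measure R K mu mun.

Lemma product_measure_coord n A : measurable A -> mu (coord n @^-1` A) = mun n A.
Proof.
move=> mA; pose B i := if i == n then A else setT.
have -> : coord n @^-1` A = cyl n.+1 B.
  apply/seteqP; split=> t /=; first by move=> An i _; rewrite /B; case: eqP => // ->.
  by move/(_ n (ltnSn n)); rewrite /B eqxx.
rewrite mu_prod => [|i _]; last by rewrite /B; case: ifP.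
rewrite big_ord_recr /= /B eqxx big1 ?mul1e // => i _.
by rewrite ltn_eqF ?probability_setT.
Qed.

Lemma Bw_invariant_scaled_marginals w : Bw_invariant R K w mu ->
  forall n A, measurable A -> mun n.+1 (scaling (w n.+1) @^-1` A) = mun n A.
Proof.
move=> inv n A mA.
have mwA := measurable_preimage_scaling (w n.+1) mA.
rewrite -(product_measure_coord n mA) -(product_measure_coord n.+1 mwA) -[RHS]inv //.
exact: measurable_preimageT (measurable_coord n) mA.
Qed.

Lemma scaled_marginals_Bw_invariant (d : nat -> K) w : dense_seq d ->
  (forall n A, measurable A -> mun n.+1 (scaling (w n.+1) @^-1` A) = mun n A) ->
  Bw_invariant R K w mu.
Proof.
move=> d_dense chain B mB.
have cyl_agree (C : set (OmegaBorel K)) : cylinders C -> mu (Bw K w @^-1` C) = mu C.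
  move=> [N [A [mA ->]]]; rewrite preimage_Bw_cyl !mu_prod //; last first.
    by case=> [|i] //= iN; exact: measurable_preimage_scaling (mA i iN).
  rewrite big_ord_recl probability_setT mul1e; apply: eq_bigr => i _.
  by rewrite lift0 chain //; exact: mA.
have setT_cyl : cylinders [set: OmegaBorel K].
  by exists 0%N, (fun=> setT); split=> //; rewrite cyl0.
have := measure_unique (@cylinders K) (fun=> setT) (measurable_OmegaE d_dense)
  (@setI_closed_cylinders K) (fun=> setT_cyl) (bigcup_const _ ((set0P _).1 setT0))
  (pushforward mu (Bw K w : OmegaBorel K -> OmegaBorel K)) mu.
move/(_ (measurable_Bw w d_dense) cyl_agree); apply=> // _.
by rewrite /pushforward; change (mu setT < +oo)%E; rewrite probability_setT ltry.
Qed.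

End product_measure.

Theorem lemma5p2_for_dense_seq (R : realType) (K : numFieldType) (d : nat -> K) :
  dense_seq d -> lemma5p2_for R K.
Proof.
move=> d_dense mun mu w w0 mu_prod.
apply: (iff_trans _ (scaling_recursionP mun w0)); split.
  exact: Bw_invariant_scaled_marginals.
exact: scaled_marginals_Bw_invariant d_dense.
Qed.

Definition rat_seq (R : realType) (n : nat) : R :=
  if unpickle n is Some q then ratr q else 0.

Lemma dense_rat_seq (R : realType) : dense_seq (@rat_seq R).
Proof.
move=> x e e0; have [q] := @rat_in_itvoo R (x - e) (x + e) ltac:(lra).
by rewrite in_itv /= => hq; exists (pickle q); rewrite /rat_seq pickleK ltr_distlC.
Qed.

Lemma norm_complex_le (R : rcfType) (u v : R) :
  `|(u +i* v)%C| <= ((`|u| + `|v|)%:C)%C.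
Proof.
rewrite normc_def lecR /= -(ger0_norm (addr_ge0 (normr_ge0 u) (normr_ge0 v))).
rewrite -(sqrtr_sqr (`|u| + `|v|)) ler_sqrt ?sqr_ge0 //.
have := real_normK (num_real u); have := real_normK (num_real v).
have := normr_ge0 u; have := normr_ge0 v; nra.
Qed.

Definition complex_seq (R : rcfType) (d : nat -> R) (n : nat) : R[i] :=
  if unpickle n is Some (m, k) then (d m +i* d k)%C else 0.

Lemma dense_complex_seq (R : rcfType) (d : nat -> R) :
  dense_seq d -> dense_seq (complex_seq d).
Proof.
move=> d_dense [a b] [r r']; rewrite ltcE => /andP[/eqP /= -> r0].
have r20 : 0 < r / 2 by rewrite divr_gt0.
have [[m hm] [k hk]] := (d_dense a _ r20, d_dense b _ r20).
exists (pickle (m, k)); rewrite /complex_seq pickleK.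
apply: le_lt_trans (norm_complex_le _ _) _.
by rewrite ltcR [ltRHS]splitr ltrD.
Qed.

Theorem lemma5p2 (R : realType) :
  lemma5p2_for R R /\ lemma5p2_for R (R[i])%C.
Proof.
split; first exact: lemma5p2_for_dense_seq (@dense_rat_seq R).
exact: lemma5p2_for_dense_seq (dense_complex_seq (@dense_rat_seq R)).
Qed.
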